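(* Let $G$ be a connected quasi-transitive bipartite graph (not necessarily locally finite). Then $G$ has a periodic proper vertex-coloring with $2$ colors.
   Context: $G$ is quasi-transitive if $V(G)$ has finitely many $\mathrm{Aut}(G)$-orbits. A vertex-coloring is periodic if the subgroup of color-preserving automorphisms of $G$ has finitely many orbits on $V(G)$. *)

From Stdlib Require Import List Relations.
Import ListNotations.

Definition simple_graph {V : Type} (adj : V -> V -> Prop) : Prop :=
  (forall x y, adj x y -> adj y x) /\ (forall x, ~ adj x x).

Definition connected {V : Type} (adj : V -> V -> Prop) : Prop :=
  forall x y : V, clos_refl_trans V adj x y.

Definition is_aut {V : Type} (adj : V -> V -> Prop) (f : V -> V) : Prop :=
  (exists g : V -> V, (forall x, g (f x) = x) /\ (forall x, f (g x) = x)) /\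
  (forall x y, adj x y <-> adj (f x) (f y)).

Definition finitely_many_orbits {V : Type} (H : (V -> V) -> Prop) : Prop :=
  exists reps : list V, forall x : V,
    exists r, In r reps /\ exists f, H f /\ f r = x.

Definition quasi_transitive {V : Type} (adj : V -> V -> Prop) : Prop :=
  finitely_many_orbits (is_aut adj).

Definition proper_coloring {V C : Type} (adj : V -> V -> Prop) (c : V -> C) : Prop :=
  forall x y, adj x y -> c x <> c y.

Definition bipartite {V : Type} (adj : V -> V -> Prop) : Prop :=
  exists c : V -> bool, proper_coloring adj c.

Definition color_preserving_aut {V C : Type} (adj : V -> V -> Prop) (c : V -> C)
  (f : V -> V) : Prop :=
  is_aut adj f /\ forall x, c (f x) = c x.

Definition periodic_coloring {V C : Type} (adj : V -> V -> Prop) (c : V -> C) : Prop :=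
  finitely_many_orbits (color_preserving_aut adj c).

(** A proper 2-colouring of a connected graph is unique up to swapping the
    two colours, so every automorphism either preserves the colouring or
    swaps the colours.  Hence the colour-preserving automorphisms form a
    subgroup of index at most 2 in the automorphism group, and a subgroup of
    finite index has finitely many orbits whenever the whole group does. *)

From Stdlib Require Import List Relations Classical Bool.
Import ListNotations.

Lemma finitely_many_orbits_of_cosets {V : Type} (H K : (V -> V) -> Prop)
    (ss : list (V -> V)) :
  finitely_many_orbits K ->
  (forall f, K f -> exists s, In s ss /\ exists h, H h /\ forall x, f x = h (s x)) ->
  finitely_many_orbits H.
Proof.
  intros [reps Hreps] Hcosets.
  exists (flat_map (fun r => map (fun s => s r) ss) reps).
  intros x.
  destruct (Hreps x) as [r [Hr [f [Kf <-]]]].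
  destruct (Hcosets f Kf) as [s [Hs [h [Hh Hf]]]].
  exists (s r). split.
  - apply in_flat_map. exists r. split; [exact Hr|].
    apply (in_map (fun s => s r)). exact Hs.
  - exists h. split; [exact Hh|]. symmetry. apply Hf.
Qed.

Section Automorphisms.

Variables (V : Type) (adj : V -> V -> Prop).

Lemma is_aut_comp (f g : V -> V) :
  is_aut adj f -> is_aut adj g -> is_aut adj (fun x => f (g x)).
Proof.
  intros [[f' [Hf'f Hff']] Hf] [[g' [Hg'g Hgg']] Hg]. split.
  - exists (fun x => g' (f' x)). split; intros x.
    + rewrite Hf'f. apply Hg'g.
    + rewrite Hgg'. apply Hff'.
  - intros x y. rewrite Hg. apply Hf.
Qed.

Lemma is_aut_inverse (f g : V -> V) :
  is_aut adj f -> (forall x, g (f x) = x) -> (forall x, f (g x) = x) ->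
  is_aut adj g.
Proof.
  intros [_ Hf] Hgf Hfg. split.
  - exists f. split; assumption.
  - intros x y. rewrite (Hf (g x) (g y)), !Hfg. reflexivity.
Qed.

Lemma proper_coloring_aut {C : Type} (c : V -> C) (f : V -> V) :
  is_aut adj f -> proper_coloring adj c -> proper_coloring adj (fun x => c (f x)).
Proof.
  intros [_ Hf] Pc x y Hxy. apply Pc, (proj1 (Hf x y)), Hxy.
Qed.

Lemma connected_edge_invariant {A : Type} (phi : V -> A) :
  connected adj -> (forall x y, adj x y -> phi x = phi y) ->
  forall x y, phi x = phi y.
Proof.
  intros Hcon Hedge x y.
  induction (Hcon x y) as [a b Hab | a | a b e _ IHab _ IHbe].
  - exact (Hedge a b Hab).
  - reflexivity.
  - congruence.
Qed.

Lemma proper_bool_colorings_xorb_edge (c d : V -> bool) (x y : V) :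
  proper_coloring adj c -> proper_coloring adj d -> adj x y ->
  xorb (c x) (d x) = xorb (c y) (d y).
Proof.
  intros Pc Pd Hxy. specialize (Pc x y Hxy). specialize (Pd x y Hxy).
  destruct (c x), (c y), (d x), (d y); simpl; congruence.
Qed.

Hypothesis Hcon : connected adj.
Variable c : V -> bool.
Hypothesis Pc : proper_coloring adj c.

Lemma aut_preserves_or_swaps_colors (f : V -> V) :
  is_aut adj f ->
  (forall x, c (f x) = c x) \/ (forall x, c (f x) = negb (c x)).
Proof.
  intros Hf.
  destruct (classic (forall x, c (f x) = c x)) as [Hpres | Hnot]; [now left|].
  right. apply not_all_ex_not in Hnot as [x0 Hx0]. intros x.
  assert (Hx : xorb (c (f x)) (c x) = xorb (c (f x0)) (c x0)).
  { apply (connected_edge_invariant (fun z => xorb (c (f z)) (c z)) Hcon).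
    intros y z. apply (proper_bool_colorings_xorb_edge (fun z => c (f z)) c).
    - exact (proper_coloring_aut c f Hf Pc).
    - exact Pc. }
  revert Hx Hx0. destruct (c (f x)), (c x), (c (f x0)), (c x0); simpl; congruence.
Qed.

Lemma aut_cosets_of_color_preserving :
  exists ss : list (V -> V), forall f, is_aut adj f ->
    exists s, In s ss /\
      exists h, color_preserving_aut adj c h /\ forall x, f x = h (s x).
Proof.
  destruct (classic (exists s, is_aut adj s /\ forall x, c (s x) = negb (c x)))
    as [[s [Hs Hswap]] | Hnoswap].
  - pose proof Hs as [[g [Hgs Hsg]] _].
    exists [fun x => x; s]. intros f Hf.
    destruct (aut_preserves_or_swaps_colors f Hf) as [Hpres | Hflip].
    + exists (fun x => x). split; [now left|].
      exists f. split; [split; assumption | reflexivity].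
    + (* f = (f \o s^-1) \o s, and f \o s^-1 preserves colours as both factors swap them. *)
      exists s. split; [now right; left|].
      exists (fun x => f (g x)). split; [split|].
      * apply is_aut_comp; [exact Hf|].
        exact (is_aut_inverse s g Hs Hgs Hsg).
      * intros x. rewrite Hflip.
        pose proof (Hswap (g x)) as Hgx. rewrite Hsg in Hgx.
        rewrite Hgx. reflexivity.
      * intros x. rewrite Hgs. reflexivity.
  - exists [fun x => x]. intros f Hf. exists (fun x => x). split; [now left|].
    exists f. split; [|reflexivity]. split; [exact Hf|].
    destruct (aut_preserves_or_swaps_colors f Hf) as [Hpres | Hflip]; [exact Hpres|].
    exfalso. apply Hnoswap. exists f. split; assumption.
Qed.

End Automorphisms.

Theorem lemma2p9 (V : Type) (adj : V -> V -> Prop) :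
  simple_graph adj -> connected adj -> quasi_transitive adj -> bipartite adj ->
  exists c : V -> bool, proper_coloring adj c /\ periodic_coloring adj c.
Proof.
  intros _ Hcon Hqt [c Pc].
  exists c. split; [exact Pc|].
  destruct (aut_cosets_of_color_preserving V adj Hcon c Pc) as [ss Hss].
  exact (finitely_many_orbits_of_cosets _ _ ss Hqt Hss).
Qed.
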